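(* In the setting of the context, suppose $G_2$ is a $p$-group and $S$ is a simple $KH_1$-module with $H_1'=H_1$, $G_1'=H_1$ and $H_1\subsetneq H_1^2\subsetneq G_2$. Then $H_1$ is not cyclic of order $p$.
   Context: $K$ is algebraically closed of characteristic zero; $G_2$ is a finite group with normal subgroups $G_1$, $H_2$, and $H_1=G_1\cap H_2$, all normal in $G_2$, with $G_2=G_1H_2$ and $[G_2:G_1]=[H_2:H_1]=p$. For a normal subgroup $N$ of a group $X$, an $N$-module $W$ and $x\in X$, ${}^xW$ is $W$ with action $n\cdot w=(x^{-1}nx)w$, and $I_X(W)=\{x\in X:{}^xW\cong W\}$. For a simple $KH_1$-module $S$: $H_1'=I_{H_2}(S)$, $G_1'=I_{G_1}(S)$, $H_1^2=I_{G_2}(S)$. *)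

From HB Require Import structures.
From mathcomp Require Import all_boot all_order all_algebra all_fingroup all_solvable all_field all_character.
From Stdlib Require Import ClassicalEpsilon.
Set Implicit Arguments. Unset Strict Implicit. Unset Printing Implicit Defensive.
Import GRing.Theory.
Local Open Scope ring_scope.

(* Conjugate module ^x S : h acts as S (x^-1 h x) = S (h ^ x). *)
Definition conj_mx (K : fieldType) (gT : finGroupType) (H : {group gT}) (n : nat)
  (rH : mx_representation K H n) (x : gT) : gT -> 'M[K]_n :=
  fun h => rH (h ^ x)%g.

Lemma conj_mx_repr (K : fieldType) (gT : finGroupType) (H : {group gT}) (n : nat)
  (rH : mx_representation K H n) (x : gT) :
  x \in 'N(H)%g -> mx_repr H (conj_mx rH x).
Proof.
move=> nHx; split; first by rewrite /conj_mx conj1g repr_mx1.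
move=> a b Ha Hb; rewrite /conj_mx conjMg repr_mxM // memJ_norm //.
Qed.

Definition conj_repr (K : fieldType) (gT : finGroupType) (H : {group gT}) (n : nat)
  (rH : mx_representation K H n) (x : gT) (nHx : x \in 'N(H)%g) :
  mx_representation K H n := MxRepresentation (conj_mx_repr rH nHx).

(* ^x S is isomorphic to S (x must normalize H for ^x S to be an H-module). *)
Definition conj_iso (K : fieldType) (gT : finGroupType) (H : {group gT}) (n : nat)
  (rH : mx_representation K H n) (x : gT) : Prop :=
  exists nHx : x \in 'N(H)%g, mx_rsim (conj_repr rH nHx) rH.

Definition pbool (P : Prop) : bool :=
  if excluded_middle_informative P then true else false.

Definition inertia_mod (K : fieldType) (gT : finGroupType) (H : {group gT}) (n : nat)
  (rH : mx_representation K H n) (X : {set gT}) : {set gT} :=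
  [set x in X | pbool (conj_iso rH x)].

From HB Require Import structures.
From mathcomp Require Import all_boot all_order all_algebra all_fingroup all_solvable all_field all_character.
Import GRing.Theory.
Local Open Scope group_scope.

(* A normal subgroup of prime order in a p-group is central, so conjugation by
   any element of G2 fixes S pointwise; hence I_{G2}(S) = G2, contradicting
   I_{G2}(S) < G2. *)

Lemma conj_iso_cent (K : fieldType) (gT : finGroupType) (H : {group gT}) (n : nat)
    (rH : mx_representation K H n) (x : gT) :
  x \in 'C(H) -> conj_iso rH x.
Proof.
move=> cHx; have nHx : x \in 'N(H) := subsetP (cent_sub H) x cHx.
exists nHx; exists 1%:M%R; rewrite ?row_free_unit ?unitmx1 // => h Hh.
by rewrite mulmx1 mul1mx /= /conj_mx /conjg -(centP cHx h Hh) mulKg.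
Qed.

Lemma inertia_mod_cent (K : fieldType) (gT : finGroupType) (H : {group gT}) (n : nat)
    (rH : mx_representation K H n) (X : {set gT}) :
  X \subset 'C(H) -> inertia_mod rH X = X.
Proof.
move=> cHX; apply/setP=> x; rewrite inE /pbool.
case: (boolP (x \in X)) => // Xx.
by case: ClassicalEpsilon.excluded_middle_informative => // -[]; apply/conj_iso_cent/(subsetP cHX).
Qed.

Lemma prime_normal_sub_center (gT : finGroupType) (p : nat) (G H : {group gT}) :
  p.-group G -> H <| G -> prime #|H| -> H \subset 'Z(G).
Proof.
move=> pG nsHG prH; apply: prime_meetG => //.
apply: meet_center_nil (pgroup_nil pG) nsHG _.
by rewrite -cardG_gt1 prime_gt1.
Qed.

Theorem mainTheorem14 (K : closedFieldType) (gT : finGroupType) (p : nat)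
  (G2 G1 H2 H1 : {group gT}) (n : nat) (S : mx_representation K H1 n) :
  [pchar K]%R =i pred0 ->
  prime p -> p.-group G2 ->
  G1 <| G2 -> H2 <| G2 -> H1 <| G2 ->
  H1 :=: G1 :&: H2 ->
  (G1 * H2)%g = G2 ->
  #|G2 : G1| = p -> #|H2 : H1| = p ->
  mx_irreducible S ->
  inertia_mod S H2 = H1 ->
  inertia_mod S G1 = H1 ->
  H1 \proper inertia_mod S G2 ->
  inertia_mod S G2 \proper G2 ->
  ~ (cyclic H1 /\ #|H1| = p).
Proof.
move=> _ pr_p pG2 _ _ nsH1 _ _ _ _ _ _ _ _ ltIG2 [_ oH1].
have sH1Z : H1 \subset 'Z(G2) by apply: prime_normal_sub_center pG2 nsH1 _; rewrite oH1.
have cH1G2 : G2 \subset 'C(H1) by rewrite centsC (subset_trans sH1Z) ?subsetIr.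
by move: ltIG2; rewrite inertia_mod_cent // properE subxx.
Qed.
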